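(* For every $\lambda>0$, $\mathrm{KD}_\lambda$ is a metric on $V$: for all $x,y,z\in V$, (1) $\mathrm{KD}_\lambda(x,y)=0$ if and only if $x=y$; (2) $\mathrm{KD}_\lambda(x,y)=\mathrm{KD}_\lambda(y,x)$; (3) $\mathrm{KD}_\lambda(x,z)\le\mathrm{KD}_\lambda(x,y)+\mathrm{KD}_\lambda(y,z)$.
   Context: Let $H=(V,E,w)$ be a weighted hypergraph: $V$ is a finite set, $E$ a set of nonempty subsets of $V$, $w\colon E\to\mathbb{R}_{>0}$. Write $x\sim y$ if some $e\in E$ contains both; $H$ is assumed connected. The degree is $d_x=\sum_{e\ni x}w_e>0$, $D=\mathrm{diag}(d_x)$. The distance $d(x,y)$ is the minimal $n$ with a chain $x=z_0\sim\cdots\sim z_n=y$. $\delta_x$ is the indicator of $x$. $\mathbb{R}^V$ carries the inner product $\langle f,g\rangle=\sum_x f(x)g(x)/d_x$ with norm $\|\cdot\|$. For $e\in E$ let $B_e=\mathrm{Conv}\{\delta_x-\delta_y : x,y\in e\}$. The multivalued hypergraph Laplacian is $L(f)=\{\sum_{e}w_e\mathtt{b}_e(\mathtt{b}_e^\top f) : \mathtt{b}_e\in\operatorname{argmax}_{\mathtt b\in B_e}\mathtt b^\top f\}$ and the normalized Laplacian is $\mathcal{L}f=L(D^{-1}f)$, a maximal monotone operator on $(\mathbb{R}^V,\langle\cdot,\cdot\rangle)$. For $\lambda>0$ the resolvent $J_\lambda=(I+\lambda\mathcal L)^{-1}$ is a single-valued map $\mathbb{R}^V\to\mathbb{R}^V$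 (equivalently $J_\lambda f=\operatorname{argmin}_g\{\frac{1}{2\lambda}\|f-g\|^2+Q(D^{-1}g)\}$, $Q(g)=\frac12\sum_e w_e\max_{x,y\in e}(g(x)-g(y))^2$). A function $f$ is weighted $1$-Lipschitz if $|f(x)/d_x-f(y)/d_y|\le d(x,y)$ for all $x,y$; $\mathrm{Lip}^1_w(V)$ denotes the set of such functions. $\mathrm{KD}_\lambda(x,y)=\sup\{\langle J_\lambda f,\delta_x-\delta_y\rangle : f\in\mathrm{Lip}^1_w(V)\}$. *)

From HB Require Import structures.
From mathcomp Require Import all_boot all_order all_algebra.
From mathcomp Require Import all_classical all_reals.
From mathcomp Require Import ereal.
Set Implicit Arguments. Unset Strict Implicit. Unset Printing Implicit Defensive.
Import Order.TTheory GRing.Theory Num.Theory.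
Local Open Scope ring_scope.
Local Open Scope classical_set_scope.

Section Hypergraph.
Variables (R : realType) (V : finType) (E : {set {set V}}) (w : {set V} -> R).

Definition hadj (x y : V) : bool := [exists e in E, (x \in e) && (y \in e)].

Definition hchain (n : nat) (x y : V) : bool :=
  [exists s : n.-tuple V, path hadj x s && (last x s == y)].

Definition hconnected : Prop := forall x y : V, exists n, hchain n x y.

(* d(x,y) = minimal n with a chain of length n from x to y (0 if none) *)
Definition hdist (x y : V) : nat :=
  match pselect (exists n, hchain n x y) with
  | left P => ex_minn P
  | right _ => 0%N
  end.

Definition deg (x : V) : R := \sum_(e in E | x \in e) w e.

Definition delta (x : V) : V -> R := fun z => (z == x)%:R.

Definition winner (f g : V -> R) : R := \sum_x f x * g x / deg x.

Definition dotp (b f : V -> R) : R := \sum_x b x * f x.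

(* B_e = Conv { delta_x - delta_y : x, y in e } *)
Definition Bset (e : {set V}) : set (V -> R) :=
  [set b | exists c : V -> V -> R,
     [/\ forall x y, 0 <= c x y,
         forall x y, c x y != 0 -> (x \in e) && (y \in e),
         \sum_x \sum_y c x y = 1
       & b = fun z => \sum_x \sum_y c x y * (delta x z - delta y z)]].

Definition Bargmax (e : {set V}) (f : V -> R) : set (V -> R) :=
  [set b | Bset e b /\ forall b', Bset e b' -> dotp b' f <= dotp b f].

Definition hLap (f : V -> R) : set (V -> R) :=
  [set v | exists b : {set V} -> (V -> R),
     (forall e, e \in E -> Bargmax e f (b e)) /\
     v = fun z => \sum_(e in E) w e * b e z * dotp (b e) f].

Definition Dinv (f : V -> R) : V -> R := fun x => f x / deg x.

Definition nLap (f : V -> R) : set (V -> R) := hLap (Dinv f).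

Definition resolvent_rel (lam : R) (f g : V -> R) : Prop :=
  exists v, nLap g v /\ f = fun z => g z + lam * v z.

(* the resolvent J_lambda = (I + lambda calL)^{-1} (single-valued) *)
Definition resolvent (lam : R) (f : V -> R) : V -> R :=
  xget (fun _ => 0) [set g | resolvent_rel lam f g].

Definition wLip1 : set (V -> R) :=
  [set f | forall x y, `|f x / deg x - f y / deg y| <= (hdist x y)%:R].

Definition KD (lam : R) (x y : V) : \bar R :=
  ereal_sup [set (winner (resolvent lam f) (fun z => delta x z - delta y z))%:E
            | f in wLip1].

End Hypergraph.

From HB Require Import structures.
From mathcomp Require Import all_boot all_order all_algebra.
From mathcomp Require Import all_classical all_reals.
From mathcomp Require Import ereal.
From mathcomp Require Import lra.
Import Order.TTheory GRing.Theory Num.Theory.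
Local Open Scope ring_scope.

(* Write J for the resolvent J_lambda.  Everything rests on two facts.
   (a) <g, delta_x - delta_y> = g(x)/d_x - g(y)/d_y, so every value in the
       supremum defining KD(x,y) is a difference of the function D^{-1} J f
       at x and at y.  This makes KD(x,x) = 0 and the triangle inequality
       immediate, the latter by splitting the difference at y.
   (b) J is odd, J(-f) = -J f, and Lip^1_w is symmetric, which gives
       KD(x,y) <= KD(y,x) and hence symmetry.
   Oddness comes from the uniqueness of solutions of f in g + lambda L(D^{-1} g),
   which follows from the monotonicity of the hypergraph Laplacian L; this
   in turn is a consequence of the structure of the convex sets B_e and of
   the argmax sets.  Finally, for x <> y we exhibit a Lipschitz f with
   J f = t D delta_x for some t > 0 (rescaling any preimage of D delta_x,
   using that distinct vertices are at distance >= 1), so KD(x,y) >= t > 0.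
   The file develops B_e, then L, then J, then KD, and ends with the theorem. *)

(* The algebraic core of the monotonicity of L on one hyperedge: if A, C are
   the maximal values of b^T h_1, b^T h_2 and P, Q the values at the other
   maximizer, then A (A - P) - C (Q - C) >= (A - C)^2 >= 0. *)
Lemma argmax_pairing_ge0 (R : realFieldType) (A C P Q : R) :
  0 <= A -> 0 <= C -> P <= C -> Q <= A -> 0 <= A * (A - P) - C * (Q - C).
Proof.
move=> A0 C0 PC QA.
have AP : A * P <= A * C by apply: ler_wpM2l.
have CQ : C * Q <= C * A by apply: ler_wpM2l.
have := sqr_ge0 (A - C); nra.
Qed.

Section ConvexEdgeSets.
Context {R : realType} {V : finType}.
Implicit Types (f h b : V -> R) (e : {set V}).

Lemma sum_delta (x : V) f : \sum_z delta R x z * f z = f x.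
Proof.
rewrite (bigD1 x) //= /delta eqxx mul1r big1 ?addr0 // => z /negbTE ->.
by rewrite mul0r.
Qed.

Lemma dotp_edge (a a' : V) f :
  dotp (fun z => delta R a z - delta R a' z) f = f a - f a'.
Proof.
by rewrite /dotp; under eq_bigr do rewrite mulrBl; rewrite sumrB !sum_delta.
Qed.

Lemma dotp_comb (c : V -> V -> R) f :
  dotp (fun z => \sum_x \sum_y c x y * (delta R x z - delta R y z)) f =
  \sum_x \sum_y c x y * (f x - f y).
Proof.
rewrite /dotp.
under eq_bigr do rewrite mulr_suml; rewrite exchange_big.
apply: eq_bigr => x _; under eq_bigr do rewrite mulr_suml; rewrite exchange_big.
apply: eq_bigr => y _; rewrite -dotp_edge /dotp mulr_sumr.
by apply: eq_bigr => z _; rewrite mulrA.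
Qed.

Lemma dotpBr b h1 h2 :
  dotp b (fun z => h1 z - h2 z) = dotp b h1 - dotp b h2.
Proof. by rewrite /dotp -sumrB; apply: eq_bigr => z _; rewrite mulrBr. Qed.

Lemma dotpZr b f (t : R) : dotp b (fun z => t * f z) = t * dotp b f.
Proof. by rewrite /dotp mulr_sumr; apply: eq_bigr => z _; rewrite mulrCA. Qed.

Lemma dotpNl b f : dotp (fun z => - b z) f = - dotp b f.
Proof. by rewrite /dotp -sumrN; apply: eq_bigr => z _; rewrite mulNr. Qed.

Lemma dotpNr b f : dotp b (fun z => - f z) = - dotp b f.
Proof. by rewrite /dotp -sumrN; apply: eq_bigr => z _; rewrite mulrN. Qed.

Lemma sum_pair_indicator (a a' : V) (G : V -> V -> R) :
  \sum_x \sum_y ((x == a) && (y == a'))%:R * G x y = G a a'.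
Proof.
rewrite (bigD1 a) //= [X in _ + X]big1 ?addr0 => [|x /negbTE xa]; last first.
  by apply: big1 => y _; rewrite xa mul0r.
rewrite (bigD1 a') //= !eqxx mul1r big1 ?addr0 // => y /negbTE ->.
by rewrite mul0r.
Qed.

Lemma Bset_edge {e : {set V}} {a a' : V} : a \in e -> a' \in e ->
  Bset e (fun z => delta R a z - delta R a' z).
Proof.
move=> ae a'e; exists (fun x y => ((x == a) && (y == a'))%:R); split.
- by move=> x y; rewrite ler0n.
- move=> x y; case: (x =P a) => [->|_]; case: (y =P a') => [->|_];
    by rewrite ?ae ?a'e ?eqxx.
- rewrite -[RHS](sum_pair_indicator a a' (fun _ _ => 1)).
  by apply: eq_bigr => x _; apply: eq_bigr => y _; rewrite mulr1.
- by apply: funext => z; rewrite sum_pair_indicator.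
Qed.

Lemma Bset_dotp_le e b f (M : R) : Bset e b ->
  (forall x y, x \in e -> y \in e -> f x - f y <= M) -> dotp b f <= M.
Proof.
move=> [c [c0 c_supp c1 ->]] oscM; rewrite dotp_comb.
rewrite -[leRHS]mul1r -c1 mulr_suml; apply: ler_sum => x _.
rewrite mulr_suml; apply: ler_sum => y _.
have [->|cxy] := eqVneq (c x y) 0; first by rewrite !mul0r.
by have /andP[xe ye] := c_supp _ _ cxy; apply: ler_wpM2l => //; apply: oscM.
Qed.

(* B_e is symmetric: swap the roles of x and y in the combination. *)
Lemma Bset_opp e b : Bset e b -> Bset e (fun z => - b z).
Proof.
move=> [c [c0 c_supp c1 ->]]; exists (fun x y => c y x); split => //.
- by move=> x y /c_supp /andP[-> ->].
- by rewrite exchange_big.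
- apply: funext => z /=; rewrite -sumrN exchange_big; apply: eq_bigr => x _.
  by rewrite -sumrN; apply: eq_bigr => y _; rewrite -mulrN opprB.
Qed.

(* On a nonempty edge the maximum of b^T f over B_e is attained at
   delta_a - delta_a', with a, a' a maximizer and a minimizer of f on e. *)
Lemma Bargmax_exists e f : e != finset.set0 -> exists b, Bargmax e f b.
Proof.
move=> /set0Pn [a0 a0e].
case: (@arg_maxP _ _ V a0 (mem e) f a0e) => a ae fa_max.
case: (@arg_minP _ _ V a0 (mem e) f a0e) => a' a'e fa'_min.
exists (fun z => delta R a z - delta R a' z); split; first exact: Bset_edge.
move=> b' /Bset_dotp_le; rewrite dotp_edge; apply => x y xe ye.
by apply: lerB; [apply: fa_max | apply: fa'_min].
Qed.

(* The maximal value is >= 0, since 0 = delta_a - delta_a lies in B_e. *)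
Lemma Bargmax_ge0 {e : {set V}} {f b : V -> R} :
  e != finset.set0 -> Bargmax e f b -> 0 <= dotp b f.
Proof.
move=> /set0Pn [a ae] [_ b_max].
by have := b_max _ (Bset_edge ae ae); rewrite dotp_edge subrr.
Qed.

End ConvexEdgeSets.

Section Hypergraph.
Context {R : realType} {V : finType} {E : {set {set V}}} {w : {set V} -> R}.
Hypothesis hE : forall e, e \in E -> e != finset.set0.
Hypothesis hw : forall e, e \in E -> 0 < w e.
Implicit Types (f g h k v : V -> R).

Lemma lap_pairing (b : {set V} -> V -> R) h k :
  \sum_z (\sum_(e in E) w e * b e z * dotp (b e) h) * k z =
  \sum_(e in E) w e * dotp (b e) h * dotp (b e) k.
Proof.
under eq_bigr do rewrite mulr_suml.
rewrite exchange_big; apply: eq_bigr => e _.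
rewrite /dotp [in RHS]mulr_sumr; apply: eq_bigr => z _.
by rewrite -!mulrA; congr (_ * _); rewrite mulrCA mulrA.
Qed.

Lemma hLap_monotone h1 h2 v1 v2 : hLap E w h1 v1 -> hLap E w h2 v2 ->
  0 <= \sum_z (v1 z - v2 z) * (h1 z - h2 z).
Proof.
move=> [b1 [b1_max ->]] [b2 [b2_max ->]].
under eq_bigr do rewrite mulrBl.
rewrite sumrB !lap_pairing -sumrB; apply: sumr_ge0 => e eE.
rewrite -!mulrA -mulrBr !dotpBr; apply: mulr_ge0; first exact/ltW/hw.
have [B1 M1] := b1_max _ eE; have [B2 M2] := b2_max _ eE.
apply: argmax_pairing_ge0; [exact: Bargmax_ge0 (hE _ eE) (b1_max _ eE)
  | exact: Bargmax_ge0 (hE _ eE) (b2_max _ eE) | exact: M2 _ B1 | exact: M1 _ B2].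
Qed.

(* L(h) is nonempty: choose a maximizer on every edge. *)
Lemma hLap_nonempty h : exists v, hLap E w h v.
Proof.
have /choice [b b_max] : forall e, exists b, e \in E -> Bargmax e h b.
  move=> e; case: (boolP (e \in E)) => [eE|_]; last by exists (fun _ => 0).
  by have [b ?] := Bargmax_exists e h (hE _ eE); exists b.
by exists (fun z => \sum_(e in E) w e * b e z * dotp (b e) h); exists b.
Qed.

(* L is odd: negate all the maximizers. *)
Lemma hLap_opp h v : hLap E w h v -> hLap E w (fun z => - h z) (fun z => - v z).
Proof.
move=> [b [b_max ->]]; exists (fun e z => - b e z); split.
  move=> e eE; have [B M] := b_max e eE; split; first exact: Bset_opp.
  by move=> b' /Bset_opp /M; rewrite !dotpNl !dotpNr opprK.
apply: funext => z; rewrite -sumrN; apply: eq_bigr => e _.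
by rewrite dotpNl dotpNr opprK mulrN mulNr.
Qed.

(* L is positively homogeneous: the same maximizers work for t h. *)
Lemma hLap_scale (t : R) h v : 0 <= t -> hLap E w h v ->
  hLap E w (fun z => t * h z) (fun z => t * v z).
Proof.
move=> t0 [b [b_max ->]]; exists b; split.
  move=> e eE; have [B M] := b_max e eE; split => // b' /M b'M.
  by rewrite !dotpZr; apply: ler_wpM2l.
apply: funext => z; rewrite mulr_sumr; apply: eq_bigr => e _.
by rewrite dotpZr mulrCA.
Qed.

Lemma Dinv_opp g : Dinv E w (fun z => - g z) = fun z => - Dinv E w g z.
Proof. by apply: funext => z; rewrite /Dinv mulNr. Qed.

Lemma Dinv_scale (t : R) g :
  Dinv E w (fun z => t * g z) = fun z => t * Dinv E w g z.
Proof. by apply: funext => z; rewrite /Dinv mulrA. Qed.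

(* The weighted inner product is the plain pairing with D^{-1} g; in
   particular <g, delta_x - delta_y> = g(x)/d_x - g(y)/d_y. *)
Lemma winner_delta g (x y : V) :
  winner E w g (fun z => delta R x z - delta R y z) = Dinv E w g x - Dinv E w g y.
Proof.
rewrite -dotp_edge /winner /dotp; apply: eq_bigr => z _.
by rewrite /Dinv mulrAC mulrC.
Qed.

Lemma resolvent_rel_opp {lam : R} {f g : V -> R} :
  resolvent_rel E w lam f g ->
  resolvent_rel E w lam (fun z => - f z) (fun z => - g z).
Proof.
move=> [v [Lv ->]]; exists (fun z => - v z); split.
  by rewrite /nLap Dinv_opp; exact: hLap_opp.
by apply: funext => z; rewrite opprD mulrN.
Qed.

Lemma resolvent_rel_scale {lam t : R} {f g : V -> R} :
  0 <= t -> resolvent_rel E w lam f g ->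
  resolvent_rel E w lam (fun z => t * f z) (fun z => t * g z).
Proof.
move=> t0 [v [Lv ->]]; exists (fun z => t * v z); split.
  by rewrite /nLap Dinv_scale; exact: hLap_scale.
by apply: funext => z; rewrite mulrDr mulrCA.
Qed.

Hypothesis hdeg : forall x, 0 < deg E w x.
Context {lam : R}.
Hypothesis hlam : 0 < lam.

(* Uniqueness of J f: if g1, g2 both solve the inclusion, monotonicity of L
   forces sum_z (g1 z - g2 z)^2 / d_z <= 0. *)
Lemma resolvent_rel_uniq {f g1 g2 : V -> R} :
  resolvent_rel E w lam f g1 -> resolvent_rel E w lam f g2 -> g1 = g2.
Proof.
move=> [v1 [Lv1 f1]] [v2 [Lv2 f2]].
have diff z : g1 z - g2 z = - lam * (v1 z - v2 z).
  have := congr1 (fun F => F z) f1; rewrite f2 /= => fz; lra.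
have sq_ge0 z : 0 <= (g1 z - g2 z) ^+ 2 / deg E w z.
  by rewrite divr_ge0 ?sqr_ge0 // ltW.
have sq_sum0 : \sum_z (g1 z - g2 z) ^+ 2 / deg E w z = 0.
  apply/eqP; rewrite eq_le sumr_ge0 // andbT.
  have -> : \sum_z (g1 z - g2 z) ^+ 2 / deg E w z =
            - lam * \sum_z (v1 z - v2 z) * (Dinv E w g1 z - Dinv E w g2 z).
    rewrite mulr_sumr; apply: eq_bigr => z _.
    by rewrite /Dinv -mulrBl expr2 mulrA {1}diff mulrA.
  rewrite mulNr oppr_le0; apply: mulr_ge0; first exact: ltW.
  exact: hLap_monotone Lv1 Lv2.
apply: funext => z; apply/eqP; rewrite -subr_eq0 -sqrf_eq0.
have /eqP := psumr_eq0P (fun i _ => sq_ge0 i) sq_sum0 (i := z) isT.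
by rewrite mulf_eq0 invr_eq0 (gt_eqF (hdeg z)) orbF.
Qed.

Lemma resolventE {f g : V -> R} :
  resolvent_rel E w lam f g -> resolvent E w lam f = g.
Proof.
move=> fg; rewrite /resolvent; case: xgetP => [g' -> fg'|no_sol].
  exact: resolvent_rel_uniq fg' fg.
by case: (no_sol g).
Qed.

(* J is odd (also when the inclusion has no solution, where J is 0). *)
Lemma resolvent_opp f :
  resolvent E w lam (fun z => - f z) = fun z => - resolvent E w lam f z.
Proof.
have [[g fg]|no_sol] := pselect (exists g, resolvent_rel E w lam f g).
  by rewrite (resolventE fg); apply/resolventE/resolvent_rel_opp.
rewrite /resolvent; case: xgetP => [g _ fg|_].
  case: no_sol; exists (fun z => - g z).
  by have := resolvent_rel_opp fg; under [fun z => - - f z]funext do rewrite opprK.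
case: xgetP => [g _ fg|_]; first by case: no_sol; exists g.
by apply: funext => z; rewrite oppr0.
Qed.

Hypothesis hconn : hconnected E.

Lemma hdist_ge1 (u u' : V) : u != u' -> (1 <= hdist E u u')%N.
Proof.
move=> uu'; rewrite /hdist; case: pselect => [P|]; last by case; apply: hconn.
case: ex_minnP => n chain_n _; rewrite lt0n; apply: contraNneq uu' => n0.
move: chain_n; rewrite n0 /hchain => /existsP [s /andP [_]].
by rewrite (tuple0 s).
Qed.

Lemma wLip1_opp {f : V -> R} : wLip1 E w f -> wLip1 E w (fun z => - f z).
Proof. by move=> f_lip x y; rewrite !mulNr -opprD normrN. Qed.

(* Every f becomes weighted 1-Lipschitz after scaling by a small t > 0:
   |t (f u / d_u - f u' / d_u')| <= t * 2 sum_z |f z / d_z| <= 1 <= d(u, u'). *)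
Lemma wLip1_rescale f : exists2 t : R, 0 < t & wLip1 E w (fun z => t * f z).
Proof.
pose S := \sum_z `|Dinv E w f z|.
have S_ge u : `|Dinv E w f u| <= S.
  by rewrite /S (bigD1 u) //= lerDl sumr_ge0.
have S0 : 0 <= S by apply: sumr_ge0.
have t0 : 0 < (1 + S + S)^-1 by rewrite invr_gt0; lra.
exists (1 + S + S)^-1 => // u u'.
have [->|uu'] := eqVneq u u'; first by rewrite subrr normr0 ler0n.
apply: (@le_trans _ _ 1); last by rewrite ler1n hdist_ge1.
rewrite -!mulrA -mulrBr normrM gtr0_norm // mulrC ler_pdivrMr ?mul1r; last lra.
apply: le_trans (ler_normB _ _) _.
by have := S_ge u; have := S_ge u'; rewrite /Dinv; lra.
Qed.

Lemma KD_ge {f : V -> R} (x y : V) : wLip1 E w f ->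
  ((Dinv E w (resolvent E w lam f) x - Dinv E w (resolvent E w lam f) y)%:E
     <= KD E w lam x y)%E.
Proof. by move=> f_lip; apply: ereal_sup_ubound; exists f; rewrite ?winner_delta. Qed.

(* KD(x, x) = 0: every contribution vanishes, and f = 0 is Lipschitz. *)
Lemma KD_refl (x : V) : KD E w lam x x = 0%:E.
Proof.
apply/le_anti/andP; split.
  by apply: ge_ereal_sup => _ [f _ <-]; rewrite winner_delta subrr.
have := @KD_ge (fun _ => 0) x x; rewrite subrr; apply.
by move=> u u'; rewrite !mul0r subrr normr0 ler0n.
Qed.

(* The contribution of f to KD(x, y) is that of -f to KD(y, x). *)
Lemma KD_le_sym (x y : V) : (KD E w lam x y <= KD E w lam y x)%E.
Proof.
apply: ge_ereal_sup => _ [f f_lip <-].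
have := KD_ge y x (wLip1_opp f_lip).
by rewrite resolvent_opp Dinv_opp winner_delta opprK addrC.
Qed.

(* Split each contribution to KD(x, z) at y. *)
Lemma KD_triangle (x y z : V) :
  (KD E w lam x z <= KD E w lam x y + KD E w lam y z)%E.
Proof.
apply: ge_ereal_sup => _ [f f_lip <-].
rewrite winner_delta -[X in X%:E](subrKA (Dinv E w (resolvent E w lam f) y)).
by rewrite EFinD; apply: leeD; apply: KD_ge.
Qed.

(* For x <> y, pick v in calL(D delta_x) and f := D delta_x + lambda v, so
   J f = D delta_x; after rescaling f to be Lipschitz, J (t f) = t D delta_x
   contributes t (delta_x(x) - delta_x(y)) = t > 0 to KD(x, y). *)
Lemma KD_pos {x y : V} :
  x != y -> exists2 t : R, 0 < t & (t%:E <= KD E w lam x y)%E.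
Proof.
move=> xy; pose g := fun z => deg E w z * delta R x z.
have Dinv_g : Dinv E w g = delta R x.
  by apply: funext => z; rewrite /Dinv /g mulrC mulrA mulVf ?mul1r ?gt_eqF.
have [v Lv] := hLap_nonempty (Dinv E w g).
have fg : resolvent_rel E w lam (fun z => g z + lam * v z) g by exists v.
have [t t0 tf_lip] := wLip1_rescale (fun z => g z + lam * v z).
exists t => //; have := KD_ge x y tf_lip.
rewrite (resolventE (resolvent_rel_scale (ltW t0) fg)) Dinv_scale Dinv_g.
by rewrite /delta eqxx eq_sym (negbTE xy) mulr1 mulr0 subr0.
Qed.

End Hypergraph.

Theorem mainTheorem6 (R : realType) (V : finType) (E : {set {set V}})
  (w : {set V} -> R)
  (hE : forall e, e \in E -> e != finset.set0)
  (hw : forall e, e \in E -> 0 < w e)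
  (hconn : hconnected E)
  (hdeg : forall x, 0 < deg E w x)
  (lam : R) (hlam : 0 < lam) :
  [/\ forall x y : V, KD E w lam x y = (0 : R)%:E <-> x = y,
      forall x y : V, KD E w lam x y = KD E w lam y x
    & forall x y z : V, (KD E w lam x z <= KD E w lam x y + KD E w lam y z)%E].
Proof.
split.
- move=> x y; split=> [KD0|<-]; last exact: KD_refl.
  apply/eqP/negP => /negP xy.
  have [t t0] := KD_pos hE hw hdeg hlam hconn xy.
  by rewrite KD0 lee_fin leNgt t0.
- by move=> x y; apply/le_anti; rewrite !KD_le_sym.
- exact: KD_triangle.
Qed.
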